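(* Let $H>0$, $\beta\in(0,1/2)$, $a>0$, $b>0$, $\eta\in(0,1]$, $D_0>0$, $R_0\ge0$ be constants. If $\eta<1$ let $\delta\in(0,\eta)$ and $\eta^-=\eta-\delta$; if $\eta=1$ let $\eta^-=1$. Then there exist constants $A,B>0$ depending only on $H,\beta,a,b,\eta^-,D_0,R_0$ such that the following holds for every $T>0$. Suppose $x^T,v^T:[0,\infty)\to\mathbb{R}^3$ satisfy \[\dot x^T=v^T(t),\qquad \dot v^T=-a_T(x^T,t)\,v^T(t)+\varepsilon_T(t),\qquad t\ge0,\] where the scalar coefficient satisfies $a_T(x,t)\ge H/(1+|x|^2)^{\beta}$, the perturbation $\varepsilon_T(t)\in\mathbb{R}^3$ satisfies $|\varepsilon_T(t)|\le a\,e^{-b(t+T)^{\eta}}$ for all $t\ge0$, and $|v^T(t)|\le D_0$ for all $t\ge0$ and $|x^T(0)|\le R_0+D_0T$. Then \[|v^T(T)|\le A\,e^{-B\,T^{\min(1-2\beta,\ \eta^-)}}.\] *)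

(* Stdlib reals. Vectors of R^3 are represented as functions
   nat -> R, of which only the components 0, 1, 2 are used. *)
From Stdlib Require Export Reals.
Open Scope R_scope.

Definition norm3 (p : nat -> R) : R :=
  sqrt (p 0%nat ^ 2 + p 1%nat ^ 2 + p 2%nat ^ 2).

Definition deriv_on_nonneg (f f' : R -> R) : Prop :=
  forall t, 0 <= t ->
    forall eps, 0 < eps -> exists del, 0 < del /\
      forall h, h <> 0 -> Rabs h < del -> 0 <= t + h ->
        Rabs ((f (t + h) - f t) / h - f' t) < eps.

Definition eta_minus (eta delta : R) : R :=
  if Rlt_dec eta 1 then eta - delta else 1.

From Stdlib Require Import Reals Lra Psatz.
Open Scope R_scope.

(* Since |v| <= D0, the trajectory satisfies |x(t)| = O(T) on [0, T], so the
   damping is at least alpha = c T^(-2 beta) there.  The kinetic energy E = |v|^2 obeys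
   E' <= -2 alpha E + 2 D0 |eps|, and the linear Gronwall inequality on [T/2, T] gives
   E(T) <= D0^2 exp(-alpha T) + D0 a exp(-b T^eta) / alpha.  The first term is
   exp(-c T^(1 - 2 beta)); in the second the polynomial factor T^(2 beta) is absorbed by
   half of the stretched exponential.  For T <= 1 the bound |v| <= D0 suffices. *)

Lemma exp_le_exp_of_le x y : x <= y -> exp x <= exp y.
Proof. intros [Hlt | ->]; [left; apply exp_increasing | right]; auto. Qed.

Lemma ln_ge0 x : 1 <= x -> 0 <= ln x.
Proof. intros [Hlt | <-]; [left; rewrite <- ln_1; apply ln_increasing | rewrite ln_1]; lra. Qed.

Lemma sq_div4_le_exp y : 0 <= y -> y ^ 2 / 4 <= exp y.
Proof.
  intros Hy. replace (exp y) with (exp (y / 2) * exp (y / 2)) by (rewrite <- exp_plus; f_equal; field).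
  pose proof (exp_ineq1_le (y / 2)). nra.
Qed.

Lemma exp_opp_Rpower_le c d e f T :
  1 <= T -> 0 <= c <= d -> e <= f -> exp (- d * Rpower T f) <= exp (- c * Rpower T e).
Proof.
  intros HT Hcd Hef. apply exp_le_exp_of_le.
  pose proof (Rle_Rpower T e f HT Hef). pose proof (exp_pos (e * ln T)).
  unfold Rpower in *. nra.
Qed.

Lemma Rpower_mul_exp_opp_Rpower_le c d e T :
  0 < d -> 0 < e -> 1 <= T ->
  Rpower T c * exp (- d * Rpower T e)
    <= exp (2 * c ^ 2 / (d * e ^ 2)) * exp (- (d / 2) * Rpower T e).
Proof.
  intros Hd He HT. unfold Rpower. rewrite <- !exp_plus. apply exp_le_exp_of_le.
  set (L := ln T). assert (HL : 0 <= L) by (apply ln_ge0; auto).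
  (* [T^e = exp (e L) >= (e L)^2 / 4] bounds the exponent by a concave quadratic in [L]. *)
  pose proof (sq_div4_le_exp (e * L) ltac:(nra)) as Hexp.
  set (m := d * e ^ 2). set (Q := 2 * c ^ 2 / m).
  assert (Hm : 0 < m) by (apply Rmult_lt_0_compat; [| apply pow_lt]; lra).
  assert (Hquad : c * L - m * L ^ 2 / 8 <= Q).
  { apply (Rmult_le_reg_r m); [lra |].
    replace (Q * m) with (2 * c ^ 2) by (unfold Q; field; lra).
    pose proof (pow2_ge_0 (4 * c - m * L)). nra. }
  assert (m * L ^ 2 / 8 <= d / 2 * exp (e * L)).
  { replace (m * L ^ 2 / 8) with (d / 2 * ((e * L) ^ 2 / 4)) by (unfold m; field).
    apply Rmult_le_compat_l; lra. }
  lra.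
Qed.

Lemma le_sqrt_mul_of_sq_le u c y :
  0 <= u -> 0 <= c -> 0 <= y -> u ^ 2 <= c * y ^ 2 -> u <= sqrt c * y.
Proof.
  intros Hu Hc Hy Hle.
  rewrite <- (sqrt_pow2 u), <- (sqrt_pow2 y), <- sqrt_mult by nra.
  apply sqrt_le_1_alt, Hle.
Qed.

Lemma decay_terms_le c1 beta b eta gam B u w T :
  0 < c1 -> 0 < b -> 0 < eta -> 1 <= T -> 0 <= u -> 0 <= w ->
  0 <= gam <= 1 - 2 * beta -> gam <= eta -> 0 <= B <= c1 / 2 -> B <= b / 4 ->
  u * exp (- c1 * Rpower T (1 - 2 * beta))
    + w * (Rpower T (2 * beta) * exp (- b * Rpower T eta))
  <= (u + w * exp (2 * (2 * beta) ^ 2 / (b * eta ^ 2))) * exp (- B * Rpower T gam) ^ 2.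
Proof.
  intros Hc1 Hb Heta HT Hu Hw Hgam Hgam_eta HB HBb.
  replace (exp (- B * Rpower T gam) ^ 2) with (exp (- (2 * B) * Rpower T gam))
    by (simpl; rewrite Rmult_1_r, <- exp_plus; f_equal; ring).
  assert (Hdamp : exp (- c1 * Rpower T (1 - 2 * beta)) <= exp (- (2 * B) * Rpower T gam))
    by (apply exp_opp_Rpower_le; lra).
  assert (Hforce : Rpower T (2 * beta) * exp (- b * Rpower T eta)
                   <= exp (2 * (2 * beta) ^ 2 / (b * eta ^ 2)) * exp (- (2 * B) * Rpower T gam)).
  { eapply Rle_trans; [apply Rpower_mul_exp_opp_Rpower_le; lra |].
    apply Rmult_le_compat_l; [left; apply exp_pos | apply exp_opp_Rpower_le; lra]. }
  nra.
Qed.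

Lemma small_time_bound D0 B g T :
  0 <= D0 -> 0 <= B -> 0 <= g -> 0 < T <= 1 -> D0 <= D0 * exp B * exp (- B * Rpower T g).
Proof.
  intros HD0 HB Hg HT.
  assert (HP : Rpower T g <= 1).
  { replace 1 with (Rpower 1 g) by (unfold Rpower; rewrite ln_1, Rmult_0_r; apply exp_0).
    apply Rle_Rpower_l; lra. }
  rewrite Rmult_assoc, <- exp_plus.
  assert (1 <= exp (B + - B * Rpower T g)) by (rewrite <- exp_0; apply exp_le_exp_of_le; nra).
  nra.
Qed.

Lemma norm3_sq (p : nat -> R) : norm3 p ^ 2 = p 0%nat ^ 2 + p 1%nat ^ 2 + p 2%nat ^ 2.
Proof. apply pow2_sqrt. nra. Qed.

Lemma norm3_ge0 (p : nat -> R) : 0 <= norm3 p.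
Proof. apply sqrt_pos. Qed.

Lemma Rabs_le_norm3 (p : nat -> R) i : (i < 3)%nat -> Rabs (p i) <= norm3 p.
Proof.
  intros Hi. rewrite <- (sqrt_pow2 (Rabs (p i))) by apply Rabs_pos.
  apply sqrt_le_1_alt. rewrite pow2_abs.
  destruct i as [|[|[|i]]]; try lia; nra.
Qed.

Lemma norm3_le_sum_Rabs (p : nat -> R) :
  norm3 p <= Rabs (p 0%nat) + Rabs (p 1%nat) + Rabs (p 2%nat).
Proof.
  pose proof (Rabs_pos (p 0%nat)); pose proof (Rabs_pos (p 1%nat)); pose proof (Rabs_pos (p 2%nat)).
  rewrite <- sqrt_pow2 by lra. apply sqrt_le_1_alt.
  rewrite <- (pow2_abs (p 0%nat)), <- (pow2_abs (p 1%nat)), <- (pow2_abs (p 2%nat)). nra.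
Qed.

Lemma dot3_le_norm3 (p q : nat -> R) :
  p 0%nat * q 0%nat + p 1%nat * q 1%nat + p 2%nat * q 2%nat <= norm3 p * norm3 q.
Proof.
  set (s := _ + _ + _).
  destruct (Rle_lt_dec s 0) as [Hs | Hs].
  { pose proof (norm3_ge0 p); pose proof (norm3_ge0 q). nra. }
  unfold norm3. rewrite <- sqrt_mult by nra. rewrite <- (sqrt_pow2 s) by lra.
  apply sqrt_le_1_alt. unfold s.
  (* Lagrange's identity *)
  pose proof (pow2_ge_0 (p 0%nat * q 1%nat - p 1%nat * q 0%nat)).
  pose proof (pow2_ge_0 (p 0%nat * q 2%nat - p 2%nat * q 0%nat)).
  pose proof (pow2_ge_0 (p 1%nat * q 2%nat - p 2%nat * q 1%nat)).
  nra.
Qed.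

Lemma deriv_on_nonneg_derivable_pt_lim f f' t :
  deriv_on_nonneg f f' -> 0 < t -> derivable_pt_lim f t (f' t).
Proof.
  intros Hd Ht eps Heps. destruct (Hd t (Rlt_le _ _ Ht) eps Heps) as [del [Hdel Hq]].
  exists (mkposreal (Rmin del t) (Rmin_pos _ _ Hdel Ht)); simpl. intros h Hh Hlt.
  pose proof (Rmin_l del t); pose proof (Rmin_r del t).
  apply Hq; auto; [lra |]. apply Rabs_def2 in Hlt. lra.
Qed.

Lemma deriv_on_nonneg_near_0 f f' r e :
  deriv_on_nonneg f f' -> 0 < r -> 0 < e -> exists s, 0 < s < r /\ Rabs (f s - f 0) <= e.
Proof.
  intros Hd Hr He.
  destruct (Hd 0 (Rle_refl 0) 1 Rlt_0_1) as [del [Hdel Hq]].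
  set (m := Rabs (f' 0) + 1).
  assert (Hm : 0 < m) by (pose proof (Rabs_pos (f' 0)); unfold m; lra).
  set (s := Rmin (del / 2) (Rmin (r / 2) (e / m))).
  assert (Hs : 0 < s) by (apply Rmin_pos; [|apply Rmin_pos]; try apply Rdiv_lt_0_compat; lra).
  assert (Hs1 : s <= del / 2) by apply Rmin_l.
  assert (Hs2 : s <= r / 2) by (eapply Rle_trans; [apply Rmin_r | apply Rmin_l]).
  assert (Hs3 : s * m <= e).
  { assert (Hse : s <= e / m) by (eapply Rle_trans; [apply Rmin_r | apply Rmin_r]).
    apply Rmult_le_compat_r with (r := m) in Hse; [|lra].
    unfold Rdiv in Hse; rewrite Rmult_assoc, Rinv_l in Hse; lra. }
  exists s. split; [lra |].
  specialize (Hq s ltac:(lra) ltac:(rewrite Rabs_pos_eq; lra) ltac:(lra)).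
  rewrite Rplus_0_l in Hq.
  assert (Hquot : Rabs ((f s - f 0) / s) <= m).
  { pose proof (Rabs_triang_inv ((f s - f 0) / s) (f' 0)). unfold m. lra. }
  replace (f s - f 0) with ((f s - f 0) / s * s) by (field; lra).
  rewrite Rabs_mult, (Rabs_pos_eq s) by lra. nra.
Qed.

Lemma deriv_on_nonneg_Rabs_sub_le f f' D :
  deriv_on_nonneg f f' -> (forall t, 0 <= t -> Rabs (f' t) <= D) ->
  forall t, 0 <= t -> Rabs (f t - f 0) <= D * t.
Proof.
  intros Hd Hb t [Ht | <-].
  2: { rewrite Rminus_diag, Rabs_R0. pose proof (Hb 0 (Rle_refl 0)).
       pose proof (Rabs_pos (f' 0)). lra. }
  (* Only a right derivative exists at [0]: apply the mean value theorem on [[s, t]], [s -> 0+]. *)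
  apply Rle_plus_epsilon. intros e He.
  destruct (deriv_on_nonneg_near_0 f f' t e Hd Ht He) as [s [Hs Hfs]].
  destruct (MVT_cor2 f f' s t ltac:(lra)) as [c [Hc Hcst]].
  { intros c Hc. apply deriv_on_nonneg_derivable_pt_lim; auto; lra. }
  assert (Rabs (f t - f s) <= D * t).
  { rewrite Hc, Rabs_mult, (Rabs_pos_eq (t - s)) by lra.
    pose proof (Hb c ltac:(lra)). pose proof (Rabs_pos (f' c)). nra. }
  pose proof (Rabs_triang (f t - f s) (f s - f 0)).
  replace (f t - f s + (f s - f 0)) with (f t - f 0) in * by ring. lra.
Qed.

Lemma derivable_pt_lim_sum_sq3 (u : nat -> R -> R) (u' : nat -> R) t :
  (forall i, (i < 3)%nat -> derivable_pt_lim (u i) t (u' i)) ->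
  derivable_pt_lim (fun s => u 0%nat s ^ 2 + u 1%nat s ^ 2 + u 2%nat s ^ 2) t
    (2 * (u 0%nat t * u' 0%nat + u 1%nat t * u' 1%nat + u 2%nat t * u' 2%nat)).
Proof.
  intros Hu.
  assert (Hsq : forall i, (i < 3)%nat ->
            derivable_pt_lim (fun s => u i s ^ 2) t (2 * u i t * u' i)).
  { intros i Hi. replace (2 * u i t * u' i) with (INR 2 * u i t ^ Nat.pred 2 * u' i)
      by (simpl; ring).
    apply (derivable_pt_lim_comp (u i) (fun y => y ^ 2)); [auto | apply derivable_pt_lim_pow]. }
  replace (2 * _) with (2 * u 0%nat t * u' 0%nat + 2 * u 1%nat t * u' 1%nat
                        + 2 * u 2%nat t * u' 2%nat) by ring.
  apply (derivable_pt_lim_plus (fun s => u 0%nat s ^ 2 + u 1%nat s ^ 2));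
    [apply (derivable_pt_lim_plus (fun s => u 0%nat s ^ 2)) |]; apply Hsq; lia.
Qed.

Lemma derivable_pt_lim_exp_scal lam t :
  derivable_pt_lim (fun s => exp (lam * s)) t (lam * exp (lam * t)).
Proof.
  rewrite Rmult_comm.
  apply (derivable_pt_lim_comp (fun s => lam * s) exp); [| apply derivable_pt_lim_exp].
  pose proof (derivable_pt_lim_scal id lam t 1 (derivable_pt_lim_id t)) as Hlin.
  rewrite Rmult_1_r in Hlin. exact Hlin.
Qed.

Lemma linear_differential_inequality (E E' : R -> R) (lam K t0 t1 : R) :
  0 < lam -> 0 <= K -> t0 < t1 ->
  (forall t, t0 <= t <= t1 -> derivable_pt_lim E t (E' t)) ->
  (forall t, t0 <= t <= t1 -> E' t <= - lam * E t + K) ->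
  E t1 <= exp (- lam * (t1 - t0)) * E t0 + K / lam.
Proof.
  intros Hlam HK Ht Hd Hle.
  (* [exp (lam t) * (E t - K / lam)] is nonincreasing on [t0, t1] *)
  set (g t := exp (lam * t) * (E t - K / lam)).
  set (g' t := lam * exp (lam * t) * (E t - K / lam) + exp (lam * t) * E' t).
  destruct (MVT_cor2 g g' t0 t1 Ht) as [c [Hc Hct]].
  { intros c Hc. unfold g, g'.
    apply (derivable_pt_lim_mult (fun s => exp (lam * s)) (fun s => E s - K / lam));
      [apply derivable_pt_lim_exp_scal |].
    replace (E' c) with (E' c - 0) by ring.
    apply (derivable_pt_lim_minus E (fun _ => K / lam)); [apply Hd; lra | apply derivable_pt_lim_const]. }
  assert (Hg' : g' c <= 0).
  { unfold g'. pose proof (exp_pos (lam * c)). pose proof (Hle c ltac:(lra)).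
    replace (lam * exp (lam * c) * (E c - K / lam) + exp (lam * c) * E' c)
      with (exp (lam * c) * (lam * E c - K + E' c)) by (field; lra). nra. }
  assert (Hmono : exp (lam * t1) * (E t1 - K / lam) <= exp (lam * t0) * (E t0 - K / lam)).
  { fold (g t1) (g t0). nra. }
  assert (HKl : 0 <= K / lam) by (unfold Rdiv; apply Rmult_le_pos; [lra | left; apply Rinv_0_lt_compat; lra]).
  pose proof (exp_pos (lam * t1)); pose proof (exp_pos (lam * t0)).
  replace (- lam * (t1 - t0)) with (lam * t0 + - (lam * t1)) by ring.
  rewrite exp_plus, exp_Ropp.
  apply (Rmult_le_reg_l (exp (lam * t1))); [lra |].
  replace (exp (lam * t1) * (exp (lam * t0) * / exp (lam * t1) * E t0 + K / lam))
    with (exp (lam * t0) * E t0 + exp (lam * t1) * (K / lam)) by (field; lra).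
  nra.
Qed.

(* [H / C^beta], with [C] chosen so that [1 + |x t|^2 <= C T^2] on [[0, T]] once [T >= 1]. *)
Definition damping_const (H beta D0 R0 : R) : R :=
  H / Rpower (1 + 9 * (R0 + 2 * D0) ^ 2) beta.

Section Trajectory.

Variables (H beta a b eta D0 R0 T : R).
Variables (x v eps : nat -> R -> R) (aT : (nat -> R) -> R -> R).

Hypotheses (HH : 0 < H) (Hbeta : 0 <= beta) (Ha : 0 <= a) (Hb : 0 <= b) (Heta : 0 <= eta)
  (HD0 : 0 <= D0) (HR0 : 0 <= R0) (HT : 1 <= T).

Hypothesis aT_ge : forall (y : nat -> R) (t : R), 0 <= t ->
  aT y t >= H / Rpower (1 + norm3 y ^ 2) beta.
Hypothesis ode : forall i : nat, (i < 3)%nat ->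
  deriv_on_nonneg (x i) (v i) /\
  deriv_on_nonneg (v i) (fun t => - aT (fun j => x j t) t * v i t + eps i t).
Hypothesis eps_le : forall t, 0 <= t ->
  norm3 (fun j => eps j t) <= a * exp (- b * Rpower (t + T) eta).
Hypothesis v_le : forall t, 0 <= t -> norm3 (fun j => v j t) <= D0.
Hypothesis x0_le : norm3 (fun j => x j 0) <= R0 + D0 * T.

Lemma position_bound t : 0 <= t <= T -> norm3 (fun j => x j t) <= 3 * (R0 + 2 * D0) * T.
Proof.
  intros Ht. eapply Rle_trans; [apply norm3_le_sum_Rabs |].
  assert (Hxi : forall i, (i < 3)%nat -> Rabs (x i t) <= (R0 + 2 * D0) * T).
  { intros i Hi.
    assert (Hvi : forall s, 0 <= s -> Rabs (v i s) <= D0).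
    { intros s Hs. eapply Rle_trans; [apply (Rabs_le_norm3 (fun j => v j s) i Hi) | auto]. }
    pose proof (deriv_on_nonneg_Rabs_sub_le _ _ D0 (proj1 (ode i Hi)) Hvi t (proj1 Ht)).
    pose proof (Rabs_le_norm3 (fun j => x j 0) i Hi).
    pose proof (Rabs_triang (x i t - x i 0) (x i 0)).
    replace (x i t - x i 0 + x i 0) with (x i t) in * by ring.
    nra. }
  pose proof (Hxi 0%nat ltac:(lia)); pose proof (Hxi 1%nat ltac:(lia)); pose proof (Hxi 2%nat ltac:(lia)).
  lra.
Qed.

Lemma damping_lower_bound t : 0 <= t <= T ->
  damping_const H beta D0 R0 / Rpower T (2 * beta) <= aT (fun j => x j t) t.
Proof.
  intros Ht. unfold damping_const. set (C := 1 + 9 * (R0 + 2 * D0) ^ 2).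
  set (n := norm3 (fun j => x j t)).
  assert (Hn : 1 + n ^ 2 <= C * T ^ 2).
  { pose proof (position_bound t Ht) as Hx. pose proof (norm3_ge0 (fun j => x j t)) as Hx0.
    fold n in Hx, Hx0. unfold C. nra. }
  assert (HTpow : Rpower (T ^ 2) beta = Rpower T (2 * beta)).
  { rewrite <- Rpower_pow, Rpower_mult by lra. now replace (INR 2 * beta) with (2 * beta) by (simpl; ring). }
  assert (Hpow : Rpower (1 + n ^ 2) beta <= Rpower C beta * Rpower T (2 * beta)).
  { rewrite <- HTpow, Rpower_mult_distr by (unfold C; nra).
    apply Rle_Rpower_l; [lra | split; nra]. }
  eapply Rle_trans; [| apply Rge_le, aT_ge; lra]. fold n.
  unfold Rdiv. rewrite Rmult_assoc, <- Rinv_mult.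
  apply Rmult_le_compat_l; [lra |]. apply Rinv_le_contravar; [apply exp_pos | auto].
Qed.

Lemma energy_decay alpha : 0 < alpha ->
  (forall t, T / 2 <= t <= T -> alpha <= aT (fun j => x j t) t) ->
  norm3 (fun j => v j T) ^ 2
    <= D0 ^ 2 * exp (- alpha * T) + D0 * a * exp (- b * Rpower T eta) / alpha.
Proof.
  intros Halpha Hdamp.
  set (w i t := - aT (fun j => x j t) t * v i t + eps i t).
  set (E t := v 0%nat t ^ 2 + v 1%nat t ^ 2 + v 2%nat t ^ 2).
  set (E' t := 2 * (v 0%nat t * w 0%nat t + v 1%nat t * w 1%nat t + v 2%nat t * w 2%nat t)).
  set (k := exp (- b * Rpower T eta)).
  assert (HE : forall t, E t = norm3 (fun j => v j t) ^ 2) by (intros; unfold E; rewrite norm3_sq; reflexivity).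
  assert (Hderiv : forall t, T / 2 <= t <= T -> derivable_pt_lim E t (E' t)).
  { intros t Ht. apply (derivable_pt_lim_sum_sq3 v (fun i => w i t)). intros i Hi.
    apply (deriv_on_nonneg_derivable_pt_lim (v i) (fun s => w i s)); [apply ode; auto | lra]. }
  assert (Hdiss : forall t, T / 2 <= t <= T -> E' t <= - (2 * alpha) * E t + 2 * D0 * a * k).
  { intros t Ht.
    assert (Heps : norm3 (fun j => eps j t) <= a * k).
    { eapply Rle_trans; [apply eps_le; lra |]. apply Rmult_le_compat_l; [lra |].
      apply exp_le_exp_of_le. pose proof (Rle_Rpower_l T (t + T) eta Heta ltac:(lra)). nra. }
    pose proof (dot3_le_norm3 (fun j => v j t) (fun j => eps j t)) as Hdot.
    pose proof (v_le t ltac:(lra)). pose proof (norm3_ge0 (fun j => v j t)).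
    pose proof (norm3_ge0 (fun j => eps j t)). pose proof (Hdamp t Ht).
    assert (0 <= E t) by (unfold E; nra).
    assert (E' t = - 2 * aT (fun j => x j t) t * E t
                   + 2 * (v 0%nat t * eps 0%nat t + v 1%nat t * eps 1%nat t + v 2%nat t * eps 2%nat t))
      by (unfold E', E, w; ring).
    simpl in Hdot. nra. }
  assert (HK : 0 <= 2 * D0 * a * k)
    by (repeat apply Rmult_le_pos; try lra; left; apply exp_pos).
  (* Starting at [T / 2] rather than [0] avoids the one-sided derivative at [0]. *)
  pose proof (linear_differential_inequality E E' (2 * alpha) _ (T / 2) T
                ltac:(lra) HK ltac:(lra) Hderiv Hdiss) as Hgr.
  rewrite <- HE.
  replace (- (2 * alpha) * (T - T / 2)) with (- alpha * T) in Hgr by field.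
  replace (2 * D0 * a * k / (2 * alpha)) with (D0 * a * k / alpha) in Hgr by (field; lra).
  assert (E (T / 2) <= D0 ^ 2).
  { rewrite HE. pose proof (v_le (T / 2) ltac:(lra)). pose proof (norm3_ge0 (fun j => v j (T / 2))). nra. }
  pose proof (exp_pos (- alpha * T)). nra.
Qed.

Lemma velocity_sq_bound :
  norm3 (fun j => v j T) ^ 2
    <= D0 ^ 2 * exp (- damping_const H beta D0 R0 * Rpower T (1 - 2 * beta))
       + D0 * a / damping_const H beta D0 R0 * (Rpower T (2 * beta) * exp (- b * Rpower T eta)).
Proof.
  set (c1 := damping_const H beta D0 R0).
  assert (Hc1 : 0 < c1) by (unfold c1, damping_const; apply Rdiv_lt_0_compat; [lra | apply exp_pos]).
  set (P := Rpower T (2 * beta)). assert (HP : 0 < P) by apply exp_pos.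
  pose proof (energy_decay (c1 / P) ltac:(apply Rdiv_lt_0_compat; lra)
                (fun t Ht => damping_lower_bound t ltac:(lra))) as Hdecay.
  replace (- (c1 / P) * T) with (- c1 * Rpower T (1 - 2 * beta)) in Hdecay.
  2: { unfold Rminus. rewrite Rpower_plus, Rpower_1, Rpower_Ropp by lra. fold P. field. lra. }
  replace (D0 * a * exp (- b * Rpower T eta) / (c1 / P))
    with (D0 * a / c1 * (P * exp (- b * Rpower T eta))) in Hdecay by (field; lra).
  exact Hdecay.
Qed.

End Trajectory.

Lemma decay_exponent_bounds beta eta delta :
  beta < 1 / 2 -> 0 < eta <= 1 -> (eta < 1 -> 0 < delta < eta) ->
  0 <= Rmin (1 - 2 * beta) (eta_minus eta delta) <= 1 - 2 * beta /\
  Rmin (1 - 2 * beta) (eta_minus eta delta) <= eta.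
Proof.
  intros Hbeta Heta Hdelta.
  assert (Hem : 0 < eta_minus eta delta <= eta).
  { unfold eta_minus. destruct (Rlt_dec eta 1) as [Hlt | Hge]; [specialize (Hdelta Hlt) |]; lra. }
  pose proof (Rmin_l (1 - 2 * beta) (eta_minus eta delta)).
  pose proof (Rmin_r (1 - 2 * beta) (eta_minus eta delta)).
  assert (0 <= Rmin (1 - 2 * beta) (eta_minus eta delta)) by (apply Rmin_glb; lra).
  lra.
Qed.

Theorem lemma3 :
  forall (H beta a b eta delta D0 R0 : R),
    0 < H -> 0 < beta < 1/2 -> 0 < a -> 0 < b -> 0 < eta <= 1 ->
    (eta < 1 -> 0 < delta < eta) -> 0 < D0 -> 0 <= R0 ->
    exists A B : R, 0 < A /\ 0 < B /\
      forall (T : R), 0 < T ->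
      forall (x v eps : nat -> R -> R) (aT : (nat -> R) -> R -> R),
        (* the scalar coefficient bound *)
        (forall (y : nat -> R) (t : R), 0 <= t ->
           aT y t >= H / Rpower (1 + norm3 y ^ 2) beta) ->
        (* the ODE system on [0, +oo), componentwise *)
        (forall i : nat, (i < 3)%nat ->
           deriv_on_nonneg (x i) (v i) /\
           deriv_on_nonneg (v i)
             (fun t => - aT (fun j => x j t) t * v i t + eps i t)) ->
        (* perturbation bound *)
        (forall t, 0 <= t ->
           norm3 (fun j => eps j t) <= a * exp (- b * Rpower (t + T) eta)) ->
        (* velocity bound and initial position bound *)
        (forall t, 0 <= t -> norm3 (fun j => v j t) <= D0) ->
        norm3 (fun j => x j 0) <= R0 + D0 * T ->
        norm3 (fun j => v j T)
          <= A * exp (- B * Rpower T (Rmin (1 - 2 * beta) (eta_minus eta delta))).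
Proof.
  intros H beta a b eta delta D0 R0 HH Hbeta Ha Hb Heta Hdelta HD0 HR0.
  destruct (decay_exponent_bounds beta eta delta ltac:(lra) Heta Hdelta) as [Hgam Hgam_eta].
  set (gam := Rmin (1 - 2 * beta) (eta_minus eta delta)) in *.
  set (c1 := damping_const H beta D0 R0).
  assert (Hc1 : 0 < c1) by (apply Rdiv_lt_0_compat; [lra | apply exp_pos]).
  set (B := Rmin (b / 4) (c1 / 2)).
  assert (HB : 0 < B) by (apply Rmin_pos; lra).
  assert (HBb : B <= b / 4) by apply Rmin_l.
  assert (HBc1 : B <= c1 / 2) by apply Rmin_r.
  set (w := D0 * a / c1). assert (Hw : 0 < w) by (apply Rdiv_lt_0_compat; nra).
  set (A2 := D0 ^ 2 + w * exp (2 * (2 * beta) ^ 2 / (b * eta ^ 2))).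
  assert (HA2 : 0 <= A2) by (pose proof (exp_pos (2 * (2 * beta) ^ 2 / (b * eta ^ 2))); unfold A2; nra).
  exists (sqrt A2 + D0 * exp B), B.
  pose proof (sqrt_pos A2); pose proof (exp_pos B).
  split; [nra | split; [exact HB |]].
  intros T HT x v eps aT HaT Hode Heps Hv Hx0. fold gam.
  set (Y := exp (- B * Rpower T gam)). assert (HY : 0 < Y) by apply exp_pos.
  assert (HvT : norm3 (fun j => v j T) <= sqrt A2 * Y \/ norm3 (fun j => v j T) <= D0 * exp B * Y).
  { destruct (Rle_lt_dec T 1) as [HT1 | HT1].
    - right. eapply Rle_trans; [apply Hv; lra | apply small_time_bound; lra].
    - left. apply le_sqrt_mul_of_sq_le; [apply norm3_ge0 | lra | lra |].
      eapply Rle_trans; [apply (velocity_sq_bound H beta a b eta D0 R0 T x v eps aT); auto; lra |].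
      fold c1 w. apply decay_terms_le; try split; nra. }
  assert (0 <= sqrt A2 * Y /\ 0 <= D0 * exp B * Y) as [] by (split; apply Rmult_le_pos; nra).
  rewrite Rmult_plus_distr_r. destruct HvT; lra.
Qed.
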